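(* Let $G=(V,E,p)$ be an influence graph. For every partial realization $\psi$ under full-adoption feedback, $$\sigma(\Gamma(\psi))\le|\Gamma(\psi)|+\sigma(\partial(\psi)).$$ Moreover, if $G$ is an in-arborescence, then $$\sigma(\Gamma(\psi))\le|\Gamma(\psi)|+\mathrm{OPT}_N(G,|{\rm dom}(\psi)|).$$
   Context: IC model: each edge $(u,v)$ has probability $p_{uv}\in[0,1]$; a realization (live-edge graph) $\phi$ contains each edge independently with probability $p_{uv}$, with distribution $\mathcal{P}$. $\Gamma(S,\phi)$ is the set of nodes reachable from $S$ in $\phi$; $\sigma(S)=\mathbb{E}_{\Phi\sim\mathcal{P}}|\Gamma(S,\Phi)|$; $\mathrm{OPT}_N(G,k)=\max_{S\subseteq V,|S|\le k}\sigma(S)$. Full-adoption feedback: selecting $u$ as a seed reveals the status of all out-going edges of every node reachable from $u$ in $\phi$. A partial realization $\psi$ records the seeds selected so far (the set ${\rm dom}(\psi)$) with their feedback; $\Gamma(\psi)$ is the set of nodes reachable from ${\rm dom}(\psi)$ through live edges (determined by $\psi$). The boundary $\partial(\psi)$ is a subset of $\Gamma(\psi)$ of minimum cardinality such that $G$ has no directed edge from $\Gamma(\psi)\setminus\partial(\psi)$ to $V\setminus\Gamma(\psi)$ (ties broken arbitrarily). An in-arborescence is an influence graph whose underlying graph is a directed tree with a root $r$ such that for every node $v$ the unique path between $v$ and $r$ is directed from $v$ to $r$. *)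

From mathcomp Require Import all_boot all_order all_algebra.
Set Implicit Arguments. Unset Strict Implicit. Unset Printing Implicit Defensive.
Import Order.TTheory GRing.Theory Num.Theory.
Local Open Scope ring_scope.

Section IC.
Variable R : realFieldType.
Variable V : finType.

(* A realization (live-edge graph) is a set of live edges. *)
Definition live_rel (phi : {set V * V}) : rel V := fun x y => (x, y) \in phi.

Definition reach (S : {set V}) (phi : {set V * V}) : {set V} :=
  [set v | [exists s in S, connect (live_rel phi) s v]].

(* Probability of realization phi (phi must be a subset of E) under the
   product distribution: each edge e in E is live independently w.p. p e. *)
Definition prob (E : {set V * V}) (p : V -> V -> R) (phi : {set V * V}) : R :=
  (\prod_(e in phi) p e.1 e.2) * (\prod_(e in E :\: phi) (1 - p e.1 e.2)).

Definition sigma (E : {set V * V}) (p : V -> V -> R) (S : {set V}) : R :=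
  \sum_(phi : {set V * V} | phi \subset E) prob E p phi * #|reach S phi|%:R.

(* OPT_N(G, k) = max_{|S| <= k} sigma(S)  (sigma >= 0, so 0 is a neutral default) *)
Definition OPT_N (E : {set V * V}) (p : V -> V -> R) (k : nat) : R :=
  \big[Num.max/0]_(S : {set V} | (#|S| <= k)%N) sigma E p S.

(* Partial realization under full-adoption feedback, obtained by selecting the
   seed set S = dom(psi) in the true realization phi: it records the status of
   all out-going edges of every node reachable from S in phi. *)
Definition psi_live (S : {set V}) (phi : {set V * V}) : {set V * V} :=
  [set e in phi | e.1 \in reach S phi].

Definition Gamma_psi (S : {set V}) (phi : {set V * V}) : {set V} :=
  reach S (psi_live S phi).

Definition seals (E : {set V * V}) (A B : {set V}) : bool :=
  [forall u, forall v, ((u, v) \in E) && (u \in A :\: B) ==> (v \in A)].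

Definition is_boundary (E : {set V * V}) (A B : {set V}) : Prop :=
  [/\ B \subset A, seals E A B &
      forall B' : {set V}, B' \subset A -> seals E A B' -> (#|B| <= #|B'|)%N].

(* In-arborescence with root r: the underlying undirected graph is a tree
   (a simple graph -- no self-loops, no antiparallel pairs -- which is connected
   with #V - 1 edges), and every node has a directed path to r (hence the unique
   tree path from v to r is directed from v to r). *)
Definition in_arborescence (E : {set V * V}) (r : V) : Prop :=
  [/\ forall v, (v, v) \notin E,
      forall u v, (u, v) \in E -> (v, u) \notin E,
      #|E| = (#|V| - 1)%N &
      forall v, connect (live_rel E) v r].

End IC.

(* For any realization phi, a node reachable from Gamma(psi) either lies in
   Gamma(psi) or is reached from a boundary node, since every edge leaving
   Gamma(psi) starts at the boundary; averaging over phi gives the first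
   bound.  In an in-arborescence every node has at most one out-edge, so the
   nodes of Gamma(psi) with an edge leaving Gamma(psi) are dead ends of the
   observed live-edge graph; the unique observed path from a seed ends in at
   most one of them, so these nodes form a sealing set of at most |dom(psi)|
   nodes, whose spread is bounded by OPT_N. *)
From mathcomp Require Import all_boot all_order all_algebra.
Import Order.TTheory GRing.Theory Num.Theory.
Local Open Scope ring_scope.
Set Implicit Arguments.
Unset Strict Implicit.

Lemma connect_sink_unique (T : finType) (e : rel T) :
  (forall x y y', e x y -> e x y' -> y = y') ->
  forall s u1 u2, (forall w, ~~ e u1 w) -> (forall w, ~~ e u2 w) ->
  connect e s u1 -> connect e s u2 -> u1 = u2.
Proof.
move=> e_fun s u1 u2 sink1 sink2 /connectP [q1 path1 u1E] /connectP [q2 path2 u2E].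
subst u1 u2; elim: q2 s q1 path1 path2 sink1 sink2 => [|y q2 IH] s [|y1 q1] //=.
- by move=> /andP [sy1 _] _ _ /(_ y1); rewrite sy1.
- by move=> _ /andP [sy _] /(_ y); rewrite sy.
move=> /andP [sy1 path1] /andP [sy path2] sink1 sink2.
rewrite -(e_fun _ _ _ sy sy1) in path1 sink1 *.
exact: IH path1 path2 sink1 sink2.
Qed.

Section InfluenceGraph.
Variable V : finType.

Definition out_unique (E : {set V * V}) : Prop :=
  forall u w w', (u, w) \in E -> (u, w') \in E -> w = w'.

Definition exit_nodes (E : {set V * V}) (A : {set V}) : {set V} :=
  [set u in A | [exists w, ((u, w) \in E) && (w \notin A)]].

Lemma seals_exit_nodes (E : {set V * V}) (A : {set V}) :
  seals E A (exit_nodes E A).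
Proof.
apply/forallP => u; apply/forallP => v; apply/implyP => /andP [uv].
rewrite in_setD inE => /andP [not_exit uA]; apply: contraR not_exit => vNA.
by rewrite uA; apply/existsP; exists v; rewrite uv.
Qed.

Lemma reach_sealed (E phi : {set V * V}) (A B : {set V}) :
  phi \subset E -> seals E A B -> reach A phi \subset A :|: reach B phi.
Proof.
move=> phiE sealAB; apply/subsetP => v.
rewrite inE => /existsP [a /andP [aA /connectP [q path_q ->]]].
elim: q a aA path_q => [|y q IH] a aA /=; first by rewrite in_setU aA.
case/andP=> ay path_q; have [aB | aNB] := boolP (a \in B).
  rewrite in_setU inE; apply/orP; right; apply/existsP; exists a.
  by rewrite aB; apply/connectP; exists (y :: q) => //=; rewrite ay.
apply: IH path_q; move/forallP: sealAB => /(_ a) /forallP /(_ y) /implyP; apply.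
by rewrite (subsetP phiE _ ay) in_setD aNB aA.
Qed.

Lemma reach_closed (S : {set V}) (phi : {set V * V}) u w :
  u \in reach S phi -> (u, w) \in phi -> w \in reach S phi.
Proof.
rewrite !inE => /existsP [s /andP [sS su]] uw; apply/existsP; exists s.
by rewrite sS (connect_trans su) ?connect1.
Qed.

Lemma card_sinks_reach (S B : {set V}) (phi : {set V * V}) :
  out_unique phi -> B \subset reach S phi ->
  (forall u w, u \in B -> (u, w) \notin phi) -> (#|B| <= #|S|)%N.
Proof.
move=> phi_fun BS sinkB.
pose seed u := odflt u [pick s in S | connect (live_rel phi) s u].
have seedP u : u \in B -> seed u \in S /\ connect (live_rel phi) (seed u) u.
  move=> uB; move: (subsetP BS u uB); rewrite inE => /existsP [s sSu].
  by rewrite /seed; case: pickP => [s' /andP [] | /(_ s)]; rewrite ?sSu.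
rewrite -(card_in_imset (f := seed)); last first.
  move=> u1 u2 u1B u2B eq_seed; have [_ seed_u1] := seedP _ u1B.
  have [_ seed_u2] := seedP _ u2B; rewrite eq_seed in seed_u1.
  exact: connect_sink_unique phi_fun _ _ _ (sinkB u1 ^~ u1B) (sinkB u2 ^~ u2B)
    seed_u1 seed_u2.
by apply/subset_leq_card/subsetP => s /imsetP [u uB ->]; have [] := seedP u uB.
Qed.

Lemma in_arborescence_out_unique (E : {set V * V}) r :
  in_arborescence E r -> out_unique E.
Proof.
case=> _ _ cardE to_root.
(* v |-> (v, next v) maps the #|V| - 1 non-root nodes injectively into E, hence
   onto E: every edge is the chosen out-edge of its tail. *)
pose next v := odflt v [pick w | (v, w) \in E].
have next_in v : v != r -> (v, next v) \in E.
  move=> vNr; have /connectP [[|y q] /= path_q vr] := to_root v.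
    by rewrite vr eqxx in vNr.
  case/andP: path_q => vy _.
  by rewrite /next; case: pickP => [//|/(_ y)]; rewrite [_ \in E]vy.
have onto : [set (v, next v) | v in [set~ r]] = E.
  apply/eqP; rewrite eqEcard; apply/andP; split.
    by apply/subsetP => e /imsetP [v]; rewrite in_setC1 => vNr ->; exact: next_in.
  by rewrite cardE card_imset ?cardsC1 ?subn1 // => a b [].
by move=> u w w'; rewrite -onto => /imsetP [v _ [-> ->]] /imsetP [v' _ [<- ->]].
Qed.

Variables (R : realFieldType) (E : {set V * V}) (p : V -> V -> R).
Hypothesis p_prob : forall u v, (u, v) \in E -> 0 <= p u v <= 1.

Lemma prob_ge0 (phi : {set V * V}) : phi \subset E -> 0 <= prob E p phi.
Proof.
move=> phiE; apply: mulr_ge0; apply: prodr_ge0 => -[u v] /=.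
  by move=> /(subsetP phiE) /p_prob /andP [].
by rewrite in_setD => /andP [_ /p_prob /andP [_]]; rewrite subr_ge0.
Qed.

Lemma sum_prob : \sum_(phi : {set V * V} | phi \subset E) prob E p phi = 1.
Proof.
(* Expand prod_e (F e + G e) = 1, with F e = p e and G e = 1 - p e on E and
   F e = 0, G e = 1 off E, as a sum over subsets J; terms with J not
   contained in E vanish. *)
pose F (e : V * V) : R := if e \in E then p e.1 e.2 else 0.
pose G (e : V * V) : R := if e \in E then 1 - p e.1 e.2 else 1.
have prodFG1 : \prod_e (F e + G e) = 1.
  by apply: big1 => e _; rewrite /F /G; case: (e \in E); rewrite ?subrKC ?add0r.
rewrite -{}prodFG1 bigA_distr [RHS](bigID (fun J : {set V * V} => J \subset E)) /=.
rewrite [X in _ + X]big1 ?addr0; last first.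
  by move=> J /subsetPn [e eJ eNE]; rewrite (bigD1 e) //= eJ /F (negbTE eNE) mul0r.
apply: eq_bigr => J JE; rewrite /prob [RHS](bigID (mem J)) /=.
congr (_ * _); first by apply: eq_bigr => e eJ; rewrite eJ /F (subsetP JE _ eJ).
rewrite [RHS](bigID (mem E)) /= [X in _ * X]big1 ?mulr1; last first.
  by move=> e /andP [eNJ eNE]; rewrite (negbTE eNJ) /G (negbTE eNE).
apply: eq_big => [e | e]; first by rewrite in_setD.
by rewrite in_setD => /andP [/negbTE -> eE]; rewrite /G eE.
Qed.

Lemma sigma_sealed (A B : {set V}) :
  seals E A B -> sigma E p A <= #|A|%:R + sigma E p B.
Proof.
move=> sealAB.
have -> : #|A|%:R = \sum_(phi : {set V * V} | phi \subset E) prob E p phi * #|A|%:R.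
  by rewrite -mulr_suml sum_prob mul1r.
rewrite /sigma -big_split /=; apply: ler_sum => phi phiE.
rewrite -mulrDr -natrD ler_wpM2l ?prob_ge0 // ler_nat.
rewrite (leq_trans (subset_leq_card (reach_sealed phiE sealAB))) //.
by rewrite cardsU leq_subr.
Qed.

Lemma sigma_le_OPT_N (B : {set V}) k : (#|B| <= k)%N -> sigma E p B <= OPT_N E p k.
Proof. exact: (le_bigmax_cond _ (P := fun B : {set V} => (#|B| <= k)%N)). Qed.

Lemma card_exit_nodes_Gamma_psi (S : {set V}) (phi : {set V * V}) :
  out_unique E -> phi \subset E -> (#|exit_nodes E (Gamma_psi S phi)| <= #|S|)%N.
Proof.
move=> E_fun phiE.
have psiE : psi_live S phi \subset E.
  by apply: subset_trans phiE; apply/subsetP => e; rewrite inE => /andP [].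
apply: card_sinks_reach.
- by move=> u w w' /(subsetP psiE) uw /(subsetP psiE); exact: E_fun.
- by apply/subsetP => u; rewrite inE => /andP [].
move=> u w; rewrite inE => /andP [uG /existsP [w' /andP [uw' w'NG]]].
apply: contra w'NG => uw; rewrite (E_fun _ _ _ uw' (subsetP psiE _ uw)).
exact: reach_closed uG uw.
Qed.

End InfluenceGraph.

Theorem lemma4 (R : realFieldType) (V : finType) (E : {set V * V})
  (p : V -> V -> R)
  (hp : forall u v, (u, v) \in E -> 0 <= p u v <= 1)
  (S : {set V}) (phi : {set V * V}) (hphi : phi \subset E) :
  (forall B : {set V}, is_boundary E (Gamma_psi S phi) B ->
     sigma E p (Gamma_psi S phi) <= #|Gamma_psi S phi|%:R + sigma E p B)
  /\
  (forall r : V, in_arborescence E r ->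
     sigma E p (Gamma_psi S phi) <= #|Gamma_psi S phi|%:R + OPT_N E p #|S|).
Proof.
split=> [B [_ sealB _] | r arbE]; first exact: sigma_sealed.
apply: le_trans (sigma_sealed hp (seals_exit_nodes E _)) _.
rewrite lerD2l; apply: sigma_le_OPT_N.
exact: card_exit_nodes_Gamma_psi (in_arborescence_out_unique arbE) hphi.
Qed.
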